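(* Let $M_t=(-1,1)\times(-1,0)$ with coordinates $(u,v)$ and metric $g_t=-\Omega^2(du\otimes dv+dv\otimes du)$, $\Omega$ smooth and strictly positive, with $\partial_u$ future directed null. Let $\gamma:[0,1]\to M_t$ be a locally Lipschitz future directed causal curve and let $p\in J^+(\gamma(0),M_t)\cap J^-(\gamma(1),M_t)$. Then there exists a causal homotopy $\Gamma:[0,1]\times[0,1]\to M_t$ of $\gamma$ with fixed endpoints such that $p=\Gamma(s;\lambda)$ for some $(s,\lambda)\in[0,1]\times[0,1]$.
   Context: $J^\pm(q,M_t)$ is the set of points reachable from $q$ by a future/past directed locally Lipschitz causal curve. A causal homotopy of $\gamma$ with fixed endpoints is a continuous map $\Gamma:[0,1]\times[0,1]\to M_t$, $(s,\lambda)\mapsto\Gamma(s;\lambda)$, such that $\Gamma(\cdot;0)=\gamma$ and, for each $\lambda$, $s\mapsto\Gamma(s;\lambda)$ is a future directed locally Lipschitz causal curve from $\gamma(0)$ to $\gamma(1)$. *)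

From mathcomp Require Import all_boot all_order all_algebra.
From mathcomp Require Import all_classical all_reals all_analysis.
Set Implicit Arguments. Unset Strict Implicit. Unset Printing Implicit Defensive.
Import Order.TTheory GRing.Theory Num.Theory.
Import numFieldNormedType.Exports.
Local Open Scope classical_set_scope.
Local Open Scope ring_scope.

Section Defs.
Variable R : realType.

Definition Mt : set (R * R) := [set z | -1 < z.1 < 1 /\ -1 < z.2 < 0].

(* f : R -> R -> R is C^infty on the open set U: there is a family D of
   functions indexed by words of partial-derivative directions
   (false = d/du, true = d/dv), with D [::] = f, each D w continuous on U,
   and D (b :: w) the partial derivative of D w in direction b on U. *)
Definition smooth_on (U : set (R * R)) (f : R -> R -> R) : Prop :=
  exists D : seq bool -> R -> R -> R,
    D [::] = f /\
    forall w : seq bool,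
      {within U, continuous (fun z : R * R => D w z.1 z.2)} /\
      forall z : R * R, U z ->
        (derivable (fun x => D w x z.2) z.1 1 /\
         derive1 (fun x => D w x z.2) z.1 = D (false :: w) z.1 z.2) /\
        (derivable (fun y => D w z.1 y) z.2 1 /\
         derive1 (fun y => D w z.1 y) z.2 = D (true :: w) z.1 z.2).

Definition gt (Omega : R -> R -> R) (z : R * R) (X Y : R * R) : R :=
  - (Omega z.1 z.2) ^+ 2 * (X.1 * Y.2 + X.2 * Y.1).

(* Time orientation: d_u is future directed null; since d_v is null with
   g(d_u, d_v) < 0, the field T = d_u + d_v is a future directed timelike
   field, and a causal vector X is future directed iff g(X, T) < 0. *)
Definition future_causal (Omega : R -> R -> R) (z : R * R) (X : R * R) : Prop :=
  X != 0 /\ gt Omega z X X <= 0 /\ gt Omega z X (1, 1) < 0.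

(* gamma : [0,1] -> M_t (given as a function on R, only its values on [0,1]
   matter) is a future directed locally Lipschitz causal curve: it takes
   values in M_t, is Lipschitz on the compact [0,1] (= locally Lipschitz),
   and for Lebesgue-almost every s in [0,1] it is differentiable at s with
   future directed causal velocity. *)
Definition fd_lipschitz_causal (Omega : R -> R -> R) (gamma : R -> R * R) : Prop :=
  (forall s, s \in `[0, 1] -> Mt (gamma s)) /\
  (exists k : R, forall s t, s \in `[0, 1] -> t \in `[0, 1] ->
      `|(gamma s).1 - (gamma t).1| <= k * `|s - t| /\
      `|(gamma s).2 - (gamma t).2| <= k * `|s - t|) /\
  {ae (@lebesgue_measure R), forall s, s \in `[0, 1] ->
      derivable (fun t => (gamma t).1) s 1 /\
      derivable (fun t => (gamma t).2) s 1 /\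
      future_causal Omega (gamma s)
        (derive1 (fun t => (gamma t).1) s, derive1 (fun t => (gamma t).2) s)}.

Definition Jplus (Omega : R -> R -> R) (q : R * R) : set (R * R) :=
  [set p | exists c : R -> R * R,
     fd_lipschitz_causal Omega c /\ c 0 = q /\ c 1 = p].

Definition Jminus (Omega : R -> R -> R) (q : R * R) : set (R * R) :=
  [set p | exists c : R -> R * R,
     fd_lipschitz_causal Omega c /\ c 0 = p /\ c 1 = q].

Definition causal_homotopy (Omega : R -> R -> R) (gamma : R -> R * R)
    (Gamma : R -> R -> R * R) : Prop :=
  {within `[0, 1] `*` `[0, 1], continuous (fun z : R * R => Gamma z.1 z.2)} /\
  (forall s, s \in `[0, 1] -> Gamma s 0 = gamma s) /\
  (forall lam, lam \in `[0, 1] ->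
     fd_lipschitz_causal Omega (fun s => Gamma s lam) /\
     Gamma 0 lam = gamma 0 /\ Gamma 1 lam = gamma 1).

End Defs.

From mathcomp Require Import all_boot all_order all_algebra.
From mathcomp Require Import all_classical all_reals all_analysis.
From mathcomp Require Import ring lra measurable_realfun.
Set Implicit Arguments. Unset Strict Implicit. Unset Printing Implicit Defensive.
Import Order.TTheory GRing.Theory Num.Theory.
Import numFieldNormedType.Exports.
Local Open Scope classical_set_scope.
Local Open Scope ring_scope.

(* In the null coordinates (u, v) the metric is conformal to -2 du dv, so,
   whatever Omega is, a tangent vector is future directed causal iff it lies in
   the quadrant u' >= 0, v' >= 0 minus the origin.  This cone and the box M_t
   are convex.  Following a causal curve from gamma 0 to p and then one from p
   to gamma 1 gives a causal curve sigma from gamma 0 to gamma 1 through p, and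
   the straight-line homotopy (1 - lam) gamma + lam sigma consists of causal
   curves with the endpoints of gamma; its last curve passes through p. *)

Section CausalCurves.
Variable R : realType.
Local Notation mu := (@lebesgue_measure R).

(* The generic hint [ae_filter_ringOfSetsType] does not fire for [mu]. *)
#[local] Instance lebesgue_ae_filter : Filter (nbhs (almost_everywhere mu)) :=
  ae_filter_ringOfSetsType mu.

Implicit Types (a b l s : R) (f g : R -> R) (c d : R -> R * R) (X Y : R * R).

Lemma convexr_lt (l x y b : R) : 0 <= l <= 1 -> x < b -> y < b -> (1 - l) * x + l * y < b.
Proof.
move=> /andP[l0 l1] xb yb.
have [xm ym] : x <= Num.max x y /\ y <= Num.max x y by rewrite !le_max !lexx orbT.
have : Num.max x y < b by rewrite gt_max xb.
nra.
Qed.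

Lemma convexr_gt (l x y b : R) : 0 <= l <= 1 -> b < x -> b < y -> b < (1 - l) * x + l * y.
Proof.
move=> l01 xb yb; have := @convexr_lt l (- x) (- y) (- b) l01.
by rewrite !ltrN2 => /(_ xb yb); lra.
Qed.

Definition convex_comb (l : R) X Y : R * R :=
  ((1 - l) * X.1 + l * Y.1, (1 - l) * X.2 + l * Y.2).

Lemma convex_comb0 X Y : convex_comb 0 X Y = X.
Proof. by case: X => x1 x2; rewrite /convex_comb /=; congr pair; ring. Qed.

Lemma convex_comb1 X Y : convex_comb 1 X Y = Y.
Proof. by case: Y => y1 y2; rewrite /convex_comb /=; congr pair; ring. Qed.

Lemma convex_combxx l X : convex_comb l X X = X.
Proof. by case: X => x1 x2; rewrite /convex_comb /=; congr pair; ring. Qed.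

Lemma Mt_convex l X Y : 0 <= l <= 1 -> Mt X -> Mt Y -> Mt (convex_comb l X Y).
Proof.
move=> l01 [/andP[? ?] /andP[? ?]] [/andP[? ?] /andP[? ?]].
by split; apply/andP; split; [apply: convexr_gt | apply: convexr_lt | apply: convexr_gt | apply: convexr_lt].
Qed.

Definition causal_cone X := [/\ 0 <= X.1, 0 <= X.2 & 0 < X.1 + X.2].

Lemma future_causalE (Omega : R -> R -> R) (z : R * R) X :
  0 < Omega z.1 z.2 -> future_causal Omega z X <-> causal_cone X.
Proof.
case: X => x y Opos; have O2 : 0 < Omega z.1 z.2 ^+ 2 by rewrite exprn_gt0.
rewrite /future_causal /causal_cone /gt /= !mulNr oppr_le0 oppr_lt0 pmulr_rge0 // pmulr_rgt0 // !mulr1.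
split => [[_ [xy0 sum0]]|[x0 y0 sum0]]; first by split; nra.
split; [apply/eqP; case; lra | split; nra].
Qed.

Lemma causal_coneZ (a : R) X : 0 < a -> causal_cone X -> causal_cone (a * X.1, a * X.2).
Proof. by move=> a0 [x0 y0 s0]; split => /=; nra. Qed.

Lemma causal_cone_convex l X Y : 0 <= l <= 1 ->
  causal_cone X -> causal_cone Y -> causal_cone (convex_comb l X Y).
Proof.
move=> l01 [x1 x2 x3] [y1 y2 y3]; have /andP[l0 l1] := l01.
split => /=; [nra | nra | have := convexr_gt l01 x3 y3; lra].
Qed.

Lemma is_derive_affine f (a b s u : R) :
  is_derive (a * s + b) 1 f u -> is_derive s 1 (fun t => f (a * t + b)) (a * u).
Proof.
move=> [df <-].
have [daff daffE] : is_derive s 1 (fun t => a * t + b) a.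
  have : is_derive s 1 (a \*: id + cst b) (a *: 1 + 0) by exact: is_deriveD.
  by rewrite scaler1 addr0.
apply: DeriveDef.
  by apply/derivable1_diffP; apply: differentiable_comp; apply/derivable1_diffP.
by rewrite -derive1E (derive1_comp daff df) !derive1E daffE mulrC.
Qed.

Definition is_velocity c s X :=
  is_derive s 1 (fun t => (c t).1) X.1 /\ is_derive s 1 (fun t => (c t).2) X.2.

Lemma is_velocity_near c d s X :
  (\forall t \near s, c t = d t) -> is_velocity c s X -> is_velocity d s X.
Proof.
move=> cd [d1 d2].
by split; [apply: near_eq_is_derive d1 | apply: near_eq_is_derive d2]; apply: filterS cd => t ->.
Qed.

Lemma is_velocity_affine c (a b s : R) X :
  is_velocity c (a * s + b) X ->
  is_velocity (fun t => c (a * t + b)) s (a * X.1, a * X.2).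
Proof. by move=> [d1 d2]; split; apply: is_derive_affine. Qed.

Lemma is_velocity_convex_comb (l : R) c d s X Y :
  is_velocity c s X -> is_velocity d s Y ->
  is_velocity (fun t => convex_comb l (c t) (d t)) s (convex_comb l X Y).
Proof. by move=> [c1 c2] [d1 d2]; split => /=; apply: is_deriveD; apply: is_deriveZ. Qed.

Lemma measurable_affine (a b : R) :
  measurable_fun [set: measurableTypeR R]
    ((fun s : R => a * s + b) : measurableTypeR R -> measurableTypeR R).
Proof.
apply: continuous_measurable_fun => x.
by apply: continuousD; [apply: continuousM; [exact: cvg_cst | exact: cvg_id] | exact: cvg_cst].
Qed.

Lemma affine_preimage_itvoc (a b x y : R) : 0 < a ->
  (fun s => a * s + b) @^-1` `]x, y] = `](x - b) / a, (y - b) / a]%classic.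
Proof.
move=> a0; apply/seteqP; split => s /=; rewrite !in_itv /= ltr_pdivrMr // ler_pdivlMr //;
  by move=> /andP[? ?]; apply/andP; split; nra.
Qed.

Lemma lebesgue_measure_affine_preimage (a b : R) (A : set R) : 0 < a -> measurable A ->
  mu A = (a%:E * mu ((fun s => (a * s + b)%R) @^-1` A))%E.
Proof.
move=> a0 mA.
pose nu := @measure_function_pushforward__canonical__measure_function_Measure
  _ _ (measurableTypeR R) (measurableTypeR R) R mu _ (measurable_affine a b).
transitivity (mscale (NngNum (ltW a0)) nu A) => //.
apply: (@lebesgue_measure_unique R (mscale (NngNum (ltW a0)) nu) _ A mA).
move=> _ [[x y] _ <-].
change (mu `]x, y] = a%:E * mu ((fun s => (a * s + b)%R) @^-1` `]x, y]))%E.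
rewrite affine_preimage_itvoc // !lebesgue_measure_itv /= !lte_fin.
rewrite ltr_pM2r ?invr_gt0 // ltrD2r.
case: ifP => _; last by rewrite mule0.
by rewrite -EFinM; congr (_%:E); field; rewrite gt_eqF.
Qed.

Lemma ae_affine (a b : R) (P : R -> Prop) : 0 < a ->
  {ae mu, forall x, P x} -> {ae mu, forall s, P (a * s + b)}.
Proof.
move=> a0 [A [mA A0 PA]]; exists ((fun s => a * s + b) @^-1` A); split.
- by rewrite -[X in measurable X]setTI; exact: measurable_affine.
- have := lebesgue_measure_affine_preimage b a0 mA; rewrite A0 => /esym/eqP.
  by rewrite mule_eq0 eqe gt_eqF //= => /eqP.
- by move=> s /= /PA.
Qed.

Lemma ae_neq (a : R) : {ae mu, forall s, s != a}.
Proof.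
exists [set a]; split; [exact: measurable_set1 | exact: lebesgue_measure_set1 |].
by move=> s /= /negP; rewrite negbK => /eqP.
Qed.

Definition causal_velocity c s := exists2 X, is_velocity c s X & causal_cone X.

Lemma causal_velocityE (Omega : R -> R -> R) c s : 0 < Omega (c s).1 (c s).2 ->
  causal_velocity c s <->
  derivable (fun t => (c t).1) s 1 /\ derivable (fun t => (c t).2) s 1 /\
  future_causal Omega (c s)
    (derive1 (fun t => (c t).1) s, derive1 (fun t => (c t).2) s).
Proof.
move=> Opos; split.
- move=> [[u v] [/= [d1 Du] [d2 Dv]] uv].
  by rewrite !derive1E Du Dv; split; [|split; [|apply/future_causalE]].
- move=> [d1 [d2 /(future_causalE _ Opos) uv]].
  by exists (derive1 (fun t => (c t).1) s, derive1 (fun t => (c t).2) s);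
    first by split => /=; rewrite derive1E; exact: derivableP.
Qed.

Lemma causal_velocity_near c d s :
  (\forall t \near s, c t = d t) -> causal_velocity c s -> causal_velocity d s.
Proof. by move=> cd [X cX coneX]; exists X => //; exact: is_velocity_near cX. Qed.

Lemma causal_velocity_affine c a b s : 0 < a ->
  causal_velocity c (a * s + b) -> causal_velocity (fun t => c (a * t + b)) s.
Proof.
by move=> a0 [X cX coneX]; exists (a * X.1, a * X.2);
  [exact: is_velocity_affine | exact: causal_coneZ].
Qed.

Lemma causal_velocity_convex_comb l c d s : 0 <= l <= 1 ->
  causal_velocity c s -> causal_velocity d s ->
  causal_velocity (fun t => convex_comb l (c t) (d t)) s.
Proof.
move=> l01 [X cX coneX] [Y dY coneY]; exists (convex_comb l X Y).
  exact: is_velocity_convex_comb.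
exact: causal_cone_convex.
Qed.

Definition lipschitz01 f (k : R) := forall s t, s \in `[0, 1] -> t \in `[0, 1] ->
  `|f s - f t| <= k * `|s - t|.

Lemma lipschitz01_le f (k k' : R) : k <= k' -> lipschitz01 f k -> lipschitz01 f k'.
Proof.
move=> kk' fk s t s01 t01; apply: le_trans (fk s t s01 t01) _.
exact: ler_wpM2r.
Qed.

Lemma lipschitz01_convexr l f g (k : R) : 0 <= l <= 1 ->
  lipschitz01 f k -> lipschitz01 g k -> lipschitz01 (fun s => (1 - l) * f s + l * g s) k.
Proof.
move=> /andP[l0 l1] fk gk s t s01 t01.
have l1' : 0 <= 1 - l by rewrite subr_ge0.
rewrite (_ : _ - _ = (1 - l) * (f s - f t) + l * (g s - g t)); last by ring.
apply: le_trans (ler_normD _ _) _; rewrite !normrM (ger0_norm l0) (ger0_norm l1').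
have := ler_wpM2l l1' (fk s t s01 t01); have := ler_wpM2l l0 (gk s t s01 t01).
lra.
Qed.

Definition concat (T : Type) (f g : R -> T) s : T :=
  if s <= 2^-1 then f (2 * s) else g (2 * s - 1).

Lemma concat0 (T : Type) (f g : R -> T) : concat f g 0 = f 0.
Proof. by rewrite /concat invr_ge0 ler0n mulr0. Qed.

Lemma concat1 (T : Type) (f g : R -> T) : concat f g 1 = g 1.
Proof.
rewrite /concat ifF; first by congr g; lra.
by apply/negbTE; rewrite -ltNge; lra.
Qed.

Lemma concat_half (T : Type) (f g : R -> T) : concat f g 2^-1 = f 1.
Proof. by rewrite /concat lexx mulfV. Qed.

Lemma concat_comp (T U : Type) (h : T -> U) (f g : R -> T) :
  (fun s => h (concat f g s)) = concat (h \o f) (h \o g).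
Proof. by apply/funext => s; rewrite /concat; case: ifP. Qed.

Lemma concat_in (T : Type) (P : T -> Prop) (f g : R -> T) :
  (forall s, s \in `[0, 1] -> P (f s)) -> (forall s, s \in `[0, 1] -> P (g s)) ->
  forall s, s \in `[0, 1] -> P (concat f g s).
Proof.
move=> Pf Pg s; rewrite /concat in_itv /= => /andP[s0 s1]; case: ifPn => sh.
  by apply: Pf; rewrite in_itv /=; apply/andP; split; lra.
by apply: Pg; rewrite in_itv /=; move: sh; rewrite -ltNge => sh; apply/andP; split; lra.
Qed.

Lemma lipschitz01_concat f g (k : R) : lipschitz01 f k -> lipschitz01 g k ->
  f 1 = g 0 -> lipschitz01 (concat f g) (2 * k).
Proof.
move=> fk gk fg s t.
wlog st : s t / s <= t => [wlog_st|].
  have [|ts s01 t01] := leP s t; first exact: wlog_st.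
  by rewrite distrC [`|s - t|]distrC; apply: wlog_st => //; exact: ltW.
rewrite !in_itv /= => /andP[s0 s1] /andP[t0 t1].
have in01 (x : R) : 0 <= x <= 1 -> x \in `[0, 1] by rewrite in_itv.
have dist2 (x y : R) : `|2 * x - 2 * y| = 2 * `|x - y|.
  by rewrite -mulrBr normrM ger0_norm.
rewrite [2 * k]mulrC -mulrA /concat; case: ifPn => sh; case: ifPn => th.
- by rewrite -dist2; apply: fk; apply: in01; apply/andP; split; lra.
- have {th} th : 2^-1 < t by rewrite ltNge.
  have s2 : 2 * s \in `[0, 1] by apply: in01; apply/andP; split; lra.
  have t2 : 2 * t - 1 \in `[0, 1] by apply: in01; apply/andP; split; lra.
  have i0 : (0 : R) \in `[0, 1] by apply: in01; rewrite lexx ler01.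
  have i1 : (1 : R) \in `[0, 1] by apply: in01; rewrite lexx ler01.
  have := fk _ _ i1 s2; rewrite [`|1 - _|]ger0_norm; last lra; move=> hf.
  have := gk _ _ t2 i0; rewrite subr0 [`|2 * t - 1|]ger0_norm; last lra; move=> hg.
  rewrite [`|s - t|]distrC [`|t - s|]ger0_norm; last lra.
  apply: le_trans (ler_distD (f 1) _ _) _.
  rewrite fg in hf; rewrite [`|f (2 * s) - _|]distrC [`|f 1 - g _|]distrC fg; lra.
- lra.
- rewrite -dist2 (_ : 2 * s - 2 * t = (2 * s - 1) - (2 * t - 1)); last by ring.
  by apply: gk; apply: in01; apply/andP; split; rewrite -?ltNge in sh th; lra.
Qed.

Definition clamp01 s := Num.min 1 (Num.max 0 s).

Lemma clamp01_in s : clamp01 s \in `[0, 1].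
Proof. by rewrite in_itv /= /clamp01 le_min ler01 le_max lexx ge_min lexx. Qed.

Lemma clamp01_id s : s \in `[0, 1] -> clamp01 s = s.
Proof. by rewrite in_itv /= /clamp01 => /andP[s0 s1]; rewrite (max_idPr s0) (min_idPr s1). Qed.

Lemma clamp01_dist s t : `|clamp01 s - clamp01 t| <= `|s - t|.
Proof.
have := ler_norm (s - t); have := ler_norm (t - s); rewrite distrC /clamp01.
case: (leP 0 s) => ?; case: (leP 0 t) => ?; case: (leP 1 s) => ?; case: (leP 1 t) => ?;
  rewrite ?(min_idPr ler01) => ? ?; rewrite ler_norml; apply/andP; split; lra.
Qed.

Lemma lipschitz_continuous f (k : R) :
  (forall s t, `|f s - f t| <= k * `|s - t|) -> continuous f.
Proof.
move=> fk x; apply/cvgrPdist_lt => e e0.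
have k1 : 0 < `|k| + 1 by rewrite ltr_wpDl.
near=> y; apply: le_lt_trans (fk x y) _.
apply: (@le_lt_trans _ _ ((`|k| + 1) * `|x - y|)).
  by apply: ler_wpM2r => //; apply: le_trans (ler_norm k) _; rewrite lerDl.
rewrite mulrC -ltr_pdivlMr //; near: y.
by exists (e / (`|k| + 1)); [exact: divr_gt0 | move=> y].
Unshelve. all: by end_near. Qed.

Lemma lipschitz01_clamp_continuous f (k : R) : lipschitz01 f k -> continuous (f \o clamp01).
Proof.
move=> fk; apply: (@lipschitz_continuous _ `|k|) => s t /=.
apply: le_trans (fk _ _ (clamp01_in s) (clamp01_in t)) _.
apply: le_trans (ler_wpM2r (normr_ge0 _) (ler_norm k)) _.
by apply: ler_wpM2l; [exact: normr_ge0 | exact: clamp01_dist].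
Qed.

Lemma continuous_convexr f g : continuous f -> continuous g ->
  continuous (fun z : R * R => (1 - z.2) * f z.1 + z.2 * g z.1).
Proof.
move=> fc gc z; apply: cvgD; apply: cvgM.
- by apply: cvgB; [exact: cvg_cst | exact: cvg_snd].
- exact: continuous_comp (@cvg_fst _ _ _ _ _) (fc z.1).
- exact: cvg_snd.
- exact: continuous_comp (@cvg_fst _ _ _ _ _) (gc z.1).
Qed.

Definition causal_curve c :=
  [/\ forall s, s \in `[0, 1] -> Mt (c s),
      exists k, lipschitz01 (fun s => (c s).1) k /\ lipschitz01 (fun s => (c s).2) k &
      {ae mu, forall s, s \in `[0, 1] -> causal_velocity c s}].

Lemma fd_lipschitz_causalE (Omega : R -> R -> R) :
  (forall z, Mt z -> 0 < Omega z.1 z.2) ->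
  forall c, fd_lipschitz_causal Omega c <-> causal_curve c.
Proof.
move=> Opos c; split.
- move=> [cM [[k ck] cae]]; split => //.
    by exists k; split => s t s01 t01; have [] := ck s t s01 t01.
  by apply: filterS cae => s cs s01; apply/(causal_velocityE (Opos _ (cM s s01)))/cs.
- move=> [cM [k [ck1 ck2]] cae]; split => //; split.
    by exists k => s t s01 t01; split; [exact: ck1 | exact: ck2].
  by apply: filterS cae => s cs s01; apply/(causal_velocityE (Opos _ (cM s s01)))/cs.
Qed.

Lemma causal_curve_ext c d :
  causal_curve c -> (forall s, s \in `[0, 1] -> d s = c s) -> causal_curve d.
Proof.
move=> [cM [k [ck1 ck2]] cae] dc; split.
- by move=> s s01; rewrite dc //; exact: cM.
- by exists k; split => s t s01 t01; rewrite !dc //; [exact: ck1 | exact: ck2].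
apply: filterS3 cae (ae_neq 0) (ae_neq 1) => s cs s0 s1 s01.
have s01o : s \in `]0, 1[.
  by move: s01; rewrite !in_itv /= lt_neqAle eq_sym s0 [s < 1]lt_neqAle s1.
apply: causal_velocity_near (cs s01).
by apply: filterS (near_in_itvoo s01o) => t /subset_itv_oo_cc t01; rewrite dc.
Qed.

Lemma causal_curve_convex_comb l c d : 0 <= l <= 1 ->
  causal_curve c -> causal_curve d -> causal_curve (fun s => convex_comb l (c s) (d s)).
Proof.
move=> l01 [cM [k [ck1 ck2]] cae] [dM [k' [dk1 dk2]] dae]; split.
- by move=> s s01; apply: Mt_convex; [| exact: cM | exact: dM].
- have [kK k'K] : k <= Num.max k k' /\ k' <= Num.max k k' by rewrite !le_max !lexx orbT.
  exists (Num.max k k'); split; apply: lipschitz01_convexr => //.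
  + exact: lipschitz01_le kK ck1.
  + exact: lipschitz01_le k'K dk1.
  + exact: lipschitz01_le kK ck2.
  + exact: lipschitz01_le k'K dk2.
- by apply: filterS2 cae dae => s cs ds s01; apply: causal_velocity_convex_comb; [| exact: cs | exact: ds].
Qed.

Lemma causal_velocity_concatl c1 c2 s : s < 2^-1 ->
  causal_velocity c1 (2 * s) -> causal_velocity (concat c1 c2) s.
Proof.
move=> sh; rewrite -[2 * s]addr0 => /(causal_velocity_affine (ltr0Sn _ 1)).
apply: causal_velocity_near.
apply: filterS (near_in_itvNyo (_ : s \in `]-oo, 2^-1[)) => [t|]; last by rewrite in_itv.
by rewrite in_itv /= /concat addr0 => /ltW ->.
Qed.

Lemma causal_velocity_concatr c1 c2 s : 2^-1 < s ->
  causal_velocity c2 (2 * s - 1) -> causal_velocity (concat c1 c2) s.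
Proof.
move=> sh /(causal_velocity_affine (ltr0Sn _ 1)).
apply: causal_velocity_near.
apply: filterS (near_in_itvoy (_ : s \in `]2^-1, +oo[)) => [t|]; last by rewrite in_itv /= sh.
by rewrite in_itv /= andbT /concat => /lt_geF ->.
Qed.

Lemma causal_curve_concat c1 c2 :
  causal_curve c1 -> causal_curve c2 -> c1 1 = c2 0 -> causal_curve (concat c1 c2).
Proof.
move=> [c1M [k1 [c1k1 c1k2]] c1ae] [c2M [k2 [c2k1 c2k2]] c2ae] c12; split.
- exact: concat_in.
- have [k1K k2K] : k1 <= Num.max k1 k2 /\ k2 <= Num.max k1 k2 by rewrite !le_max !lexx orbT.
  exists (2 * Num.max k1 k2); rewrite !concat_comp; split; apply: lipschitz01_concat.
  + exact: lipschitz01_le k1K c1k1.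
  + exact: lipschitz01_le k2K c2k1.
  + by rewrite /= c12.
  + exact: lipschitz01_le k1K c1k2.
  + exact: lipschitz01_le k2K c2k2.
  + by rewrite /= c12.
have two_gt0 : (0 : R) < 2 by [].
apply: filterS3 (ae_affine 0 two_gt0 c1ae) (ae_affine (-1) two_gt0 c2ae) (ae_neq 2^-1).
move=> s cv1 cv2 sh; rewrite in_itv /= => /andP[s0 s1].
have [slt|sgt|seq] := ltgtP s 2^-1; last by rewrite seq eqxx in sh.
- apply: causal_velocity_concatl (slt) _; rewrite -[2 * s]addr0.
  by apply: cv1; rewrite in_itv /=; apply/andP; split; lra.
- apply: causal_velocity_concatr (sgt) _.
  by apply: cv2; rewrite in_itv /=; apply/andP; split; lra.
Qed.

(* Curves are only controlled on [0, 1]; clamping the parameter makes the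
   homotopy continuous on the whole plane. *)
Lemma continuous_clamped_homotopy c d : causal_curve c -> causal_curve d ->
  continuous (fun z : R * R => convex_comb z.2 (c (clamp01 z.1)) (d (clamp01 z.1))).
Proof.
move=> [_ [k [ck1 ck2]] _] [_ [k' [dk1 dk2]] _] z.
apply: (@cvg_pair _ _ _ _ (nbhs _) (nbhs _)).
- exact: (continuous_convexr (lipschitz01_clamp_continuous ck1) (lipschitz01_clamp_continuous dk1)).
- exact: (continuous_convexr (lipschitz01_clamp_continuous ck2) (lipschitz01_clamp_continuous dk2)).
Qed.

End CausalCurves.

Theorem lemma2p10 (R : realType) (Omega : R -> R -> R)
  (Omega_smooth : smooth_on (@Mt R) Omega)
  (Omega_pos : forall z : R * R, Mt z -> 0 < Omega z.1 z.2)
  (gamma : R -> R * R) (hgamma : fd_lipschitz_causal Omega gamma)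
  (p : R * R) (hp1 : Jplus Omega (gamma 0) p) (hp2 : Jminus Omega (gamma 1) p) :
  exists Gamma : R -> R -> R * R,
    causal_homotopy Omega gamma Gamma /\
    exists s lam : R, s \in `[0, 1] /\ lam \in `[0, 1] /\ p = Gamma s lam.
Proof.
have causalE := fd_lipschitz_causalE Omega_pos.
have /(causalE _) cgamma := hgamma.
case: hp1 => c1 [/(causalE _) cc1 [c10 c11]]; case: hp2 => c2 [/(causalE _) cc2 [c20 c21]].
have csigma : causal_curve (concat c1 c2) by apply: causal_curve_concat; rewrite // c11 c20.
have in01 (x : R) : 0 <= x <= 1 -> x \in `[0, 1] by rewrite in_itv.
have zero01 : (0 : R) \in `[0, 1] by apply: in01; rewrite lexx ler01.
have one01 : (1 : R) \in `[0, 1] by apply: in01; rewrite lexx ler01.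
have half01 : (2^-1 : R) \in `[0, 1] by apply: in01; apply/andP; split; lra.
exists (fun s lam => convex_comb lam (gamma (clamp01 s)) (concat c1 c2 (clamp01 s))); split.
  split; [|split].
  - exact/continuous_subspaceT/continuous_clamped_homotopy.
  - by move=> s s01; rewrite clamp01_id // convex_comb0.
  - move=> lam; rewrite in_itv /= => lam01; split.
      apply/causalE/(causal_curve_ext (causal_curve_convex_comb lam01 cgamma csigma)).
      by move=> s s01; rewrite clamp01_id.
    by rewrite !clamp01_id // concat0 concat1 -c10 -c21 !convex_combxx.
exists 2^-1, 1; do 2!split => //.
by rewrite clamp01_id // concat_half convex_comb1 c11.
Qed.
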